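(* For a bigraph $X$, the poset $C(X^{K_2})$ is homotopy equivalent to the box complex $B_{/K_2}(X)$.
   Context: A graph is a set $V$ with a symmetric relation $E\subset V\times V$ (loops allowed). $K_2$ has vertices $0,1$ and edges $(0,1),(1,0)$, and is a bigraph via the identity coloring. A bigraph is a graph $X$ with a graph homomorphism $\varepsilon_X:X\to K_2$; $V_i(X)=\varepsilon_X^{-1}(i)$. $X^{K_2}$ is the graph whose vertices are maps $f:\{0,1\}\to V(X)$ with $f(0)\in V_0(X)$, $f(1)\in V_1(X)$, with $f,g$ adjacent iff $(f(0),g(1))\in E(X)$ and $(f(1),g(0))\in E(X)$. For a graph $G$, $C(G)$ is the poset of finite nonempty $\sigma\subset V(G)$ with $\sigma\times\sigma\subset E(G)$, ordered by inclusion. $B_{/K_2}(X)$ is the poset of pairs $(\sigma,\tau)$, $\sigma\subset V_0(X)$, $\tau\subset V_1(X)$ finite nonempty with $\sigma\times\tau\subset E(X)$, ordered componentwise by inclusion. Posets are regarded as spaces via geometric realizations of order complexes. *)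

From HB Require Import structures.
From mathcomp Require Import all_boot all_order all_algebra.
From mathcomp Require Import finmap.
From mathcomp Require Import all_classical.
From mathcomp Require Import reals topology.
From mathcomp Require Import Rstruct Rstruct_topology.
From Stdlib Require Import Rdefinitions.

Set Implicit Arguments.
Unset Strict Implicit.
Unset Printing Implicit Defensive.

Import Order.TTheory GRing.Theory Num.Theory.
Local Open Scope classical_set_scope.
Local Open Scope ring_scope.


Definition unit_interval : Type := set_type (`[0%R, 1%R] : set R).

Definition homotopic (X Y : topologicalType) (f g : X -> Y) : Prop :=
  exists H : (X * unit_interval)%type -> Y,
    continuous H /\
    (forall (x : X) (t : unit_interval), set_val t = 0%R -> H (x, t) = f x) /\
    (forall (x : X) (t : unit_interval), set_val t = 1%R -> H (x, t) = g x).

Definition homotopy_equivalent (X Y : topologicalType) : Prop :=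
  exists (f : X -> Y) (g : Y -> X),
    continuous f /\ continuous g /\
    homotopic (g \o f) id /\ homotopic (f \o g) id.

(* A point of the geometric realization of the order
   complex is a family of barycentric coordinates t : T -> R, nonnegative,
   with finite support contained in P and forming a chain, summing to 1. *)
Definition supp {T : Type} (t : T -> R) : set T := [set x | t x != 0%R].

Definition realization_point {T : choiceType} (P : set T)
    (le : T -> T -> Prop) (t : T -> R) : Prop :=
  [/\ forall x, (0 <= t x)%R,
      finite_set (supp t),
      supp t `<=` P,
      (forall x y, supp t x -> supp t y -> le x y \/ le y x) &
      (\sum_(x \in supp t) t x)%R = 1%R].

Definition realization {T : choiceType} (P : set T) (le : T -> T -> Prop)
  : Type := set_type (realization_point P le).

(* Weak (coherent) topology: U is open iff for every finite set F of vertices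
   the trace of U on the (finite, Euclidean) subcomplex spanned by F is open,
   i.e. is the trace of an open set of the product topology on T -> R. *)
Definition realization_open {T : choiceType} (P : set T)
    (le : T -> T -> Prop) (U : set (realization P le)) : Prop :=
  forall F : set T, finite_set F ->
    exists V : set {ptws T -> R}, open V /\
      forall p : realization P le, supp (set_val p) `<=` F ->
        (U p <-> V (set_val p)).

Section RealizationTopology.
Context {T : choiceType} (P : set T) (le : T -> T -> Prop).


Lemma realization_openT : @realization_open T P le setT.
Proof.
move=> F _; exists setT; split; first exact: openT.
by move=> p _.
Qed.

Lemma realization_openI : setI_closed (@realization_open T P le).
Proof.
move=> A B oA oB F fF.
have [VA [oVA hA]] := oA F fF; have [VB [oVB hB]] := oB F fF.
exists (VA `&` VB); split; first exact: openI.
move=> p sp; split.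
- by move=> [/(hA p sp) ? /(hB p sp) ?].
- by move=> [? ?]; split; [apply/(hA p sp)|apply/(hB p sp)].
Qed.

Lemma realization_open_bigU (I : Type) (f : I -> set (realization P le)) :
  (forall i, realization_open (f i)) -> realization_open (\bigcup_i f i).
Proof.
move=> of_ F fF.
pose V i := projT1 (cid (of_ i F fF)).
have hV i := projT2 (cid (of_ i F fF)).
exists (\bigcup_i V i); split.
  by apply: bigcup_open => i _; case: (hV i).
move=> p sp; split.
- by move=> [i _ /((proj2 (hV i)) p sp) ?]; exists i.
- by move=> [i _ ?]; exists i => //; apply/((proj2 (hV i)) p sp).
Qed.

HB.instance Definition _ :=
  Choice.copy (realization P le) (set_type (realization_point P le)).

HB.instance Definition _ := isOpenTopological.Build (realization P le)
  realization_openT realization_openI realization_open_bigU.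

End RealizationTopology.

(* A bigraph structure on the graph (V,E)
   (with V the whole type) is a homomorphism eps : V -> K_2, where the
   vertices 0,1 of K_2 are encoded by false,true; K_2 has edges exactly
   between distinct vertices, so eps is a homomorphism iff
   E x y -> eps x != eps y. *)
Definition graph_sym {T : Type} (E : T -> T -> Prop) : Prop :=
  forall x y, E x y -> E y x.

Definition bigraph_hom {V : Type} (E : V -> V -> Prop) (eps : V -> bool) : Prop :=
  forall x y, E x y -> eps x != eps y.

Definition clique_set {T : choiceType} (Vs : set T) (E : T -> T -> Prop)
  : set {fset T} :=
  [set s | (s != fset0)%fset /\ (forall x, x \in s -> Vs x) /\
           (forall x y, x \in s -> y \in s -> E x y)].

Definition fsubset_rel {T : choiceType} (s t : {fset T}) : Prop := (s `<=` t)%fset.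

(* X^{K_2}: vertices are maps f : {0,1} -> V(X) with f(0) in V_0, f(1) in V_1,
   encoded as the pair (f(0), f(1)); f ~ g iff (f0,g1) in E and (f1,g0) in E. *)
Definition expK2_vertices {V : Type} (eps : V -> bool) : set (V * V) :=
  [set p | eps p.1 = false /\ eps p.2 = true].

Definition expK2_edges {V : Type} (E : V -> V -> Prop) (f g : V * V) : Prop :=
  E f.1 g.2 /\ E f.2 g.1.

Definition box_set {V : choiceType} (E : V -> V -> Prop) (eps : V -> bool)
  : set ({fset V} * {fset V}) :=
  [set st | [/\ (st.1 != fset0)%fset, (st.2 != fset0)%fset,
               (forall x, x \in st.1 -> eps x = false),
               (forall y, y \in st.2 -> eps y = true) &
               (forall x y, x \in st.1 -> y \in st.2 -> E x y)]].

Definition box_le {V : choiceType} (a b : {fset V} * {fset V}) : Prop :=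
  (a.1 `<=` b.1)%fset /\ (a.2 `<=` b.2)%fset.

Section Sanity.
Context {T : choiceType} (P : set T) (le : T -> T -> Prop).
Lemma realization_openE (U : set (realization P le)) :
  open U = realization_open U.
Proof. by []. Qed.
End Sanity.

From HB Require Import structures.
From mathcomp Require Import all_boot all_order all_algebra finmap all_classical.
From mathcomp Require Import reals topology normedtype Rstruct Rstruct_topology.
From mathcomp Require Import lra.

(* The maps F σ = (π₀ σ, π₁ σ) and G (σ, τ) = σ × τ are monotone between the two
   posets, with F ∘ G = id and σ ⊆ G (F σ).  A monotone map f induces a continuous
   map |f| of realizations by pushing barycentric coordinates forward, and f ↦ |f|
   is functorial.  If f ≤ g pointwise then |g| ≃ |f|: the map [f, g] on the cylinder
   P × {0 < 1} is monotone, and composing |[f, g]| with the standard triangulation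
   |P| × [0, 1] → |P × {0 < 1}| of the prism gives the homotopy.  Hence |F| and |G|
   are inverse homotopy equivalences. *)

Set Implicit Arguments.
Unset Strict Implicit.
Unset Printing Implicit Defensive.

Import Order.TTheory GRing.Theory Num.Theory.
Local Open Scope classical_set_scope.
Local Open Scope ring_scope.

Local Notation R := Rdefinitions.R.

Section SupportSums.
Variable T : choiceType.
Implicit Types (S : seq T) (w : T -> R).

Definition supp_in S w := forall x, w x != 0 -> x \in S.

Definition supp_seq w : seq T := fset_set (supp w).

Lemma supp_seq_uniq w : uniq (supp_seq w).
Proof. exact: fset_uniq. Qed.

Lemma mem_supp_seq w x : finite_set (supp w) -> (x \in supp_seq w) = (w x != 0).
Proof.
move=> fin; rewrite /supp_seq in_fset_set //.
by apply/idP/idP => [/set_mem|?]; last exact: mem_set.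
Qed.

Lemma supp_in_supp_seq w : finite_set (supp w) -> supp_in (supp_seq w) w.
Proof. by move=> fin x; rewrite mem_supp_seq. Qed.

Lemma fsbig_supp_seq w : finite_set (supp w) ->
  \sum_(x \in supp w) w x = \sum_(x <- supp_seq w) w x.
Proof. exact: fsbig_finite. Qed.

Lemma eq_big_supp S1 S2 (Q : pred T) w :
  uniq S1 -> uniq S2 -> supp_in S1 w -> supp_in S2 w ->
  \sum_(x <- S1 | Q x) w x = \sum_(x <- S2 | Q x) w x.
Proof.
move=> uS1 uS2 wS1 wS2.
have nz_sum S : \sum_(x <- S | Q x) w x = \sum_(x <- [seq x <- S | w x != 0] | Q x) w x.
  rewrite big_filter_cond big_mkcond [RHS]big_mkcond; apply: eq_bigr => x _.
  by case: (Q x); case: eqP => //= ->.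
rewrite nz_sum [RHS]nz_sum; apply/perm_big/uniq_perm; rewrite ?filter_uniq //.
move=> x; rewrite !mem_filter; case: (boolP (w x != 0)) => //= wx.
by rewrite wS1 ?wS2.
Qed.

Lemma big_seq_pred1 S w z : uniq S -> (z \notin S -> w z = 0) ->
  \sum_(x <- S | x == z) w x = w z.
Proof.
move=> uS wS; case: (boolP (z \in S)) => zS.
  rewrite (big_rem z) //= eqxx big1_seq ?addr0 // => x /andP[/eqP -> ].
  by rewrite mem_rem_uniq // inE eqxx.
by rewrite big1_seq ?wS // => x /andP[/eqP -> ]; rewrite (negPf zS).
Qed.

End SupportSums.

Section Pushforward.
Variables T T' : choiceType.
Implicit Types (S : seq T) (w : T -> R).

Definition pushf S (f : T -> T') w (z : T') : R := \sum_(x <- S | f x == z) w x.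

Lemma pushf_neq0 S f w z : pushf S f w z != 0 ->
  exists x, [/\ x \in S, w x != 0 & f x = z].
Proof.
move=> /eqP nz; apply: contrapT => nex; apply/nz/big1_seq => x /andP[/eqP fx xS].
by apply/eqP; apply: contra_notT nex => wx; exists x.
Qed.

Lemma pushf_ge0 S f w z : (forall x, 0 <= w x) -> 0 <= pushf S f w z.
Proof. by move=> w0; apply: sumr_ge0. Qed.

Lemma finite_supp_pushf S f w : finite_set (supp (pushf S f w)).
Proof.
apply: (sub_finite_set _ (finite_seq (map f S))) => z /pushf_neq0[x [xS _ <-]].
exact: map_f.
Qed.

Lemma eq_in_pushf S f g w : {in S, f =1 g} -> pushf S f w =1 pushf S g w.
Proof.
move=> fg z; rewrite /pushf big_seq_cond [RHS]big_seq_cond.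
by apply: eq_bigl => x; case: (boolP (x \in S)) => // /fg ->.
Qed.

Lemma eq_pushf S1 S2 f w : uniq S1 -> uniq S2 -> supp_in S1 w -> supp_in S2 w ->
  pushf S1 f w =1 pushf S2 f w.
Proof.
by move=> uS1 uS2 wS1 wS2 z; apply: eq_big_supp.
Qed.

Lemma big_pushf (G : seq T') S f w : uniq G -> {in S, forall x, f x \in G} ->
  \sum_(z <- G) pushf S f w z = \sum_(x <- S) w x.
Proof.
move=> uG fG; rewrite /pushf.
under eq_bigr do rewrite big_mkcond.
rewrite exchange_big /= !big_seq; apply: eq_bigr => x xS.
rewrite -big_mkcond /=; under eq_bigl do rewrite eq_sym.
by rewrite (big_seq_pred1 (w := fun=> w x)) ?fG.
Qed.

Lemma pushf_inj S f w x : injective f -> uniq S -> supp_in S w ->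
  pushf S f w (f x) = w x.
Proof.
move=> f_inj uS wS; rewrite /pushf; under eq_bigl do rewrite inj_eq //.
by rewrite big_seq_pred1 // => xS; apply/eqP; apply: contraNT xS; apply: wS.
Qed.

End Pushforward.

Lemma pushf_comp (T T' T'' : choiceType) (S : seq T) (f : T -> T') (g : T' -> T'')
    (w : T -> R) : uniq S ->
  pushf (supp_seq (pushf S f w)) g (pushf S f w) =1 pushf S (g \o f) w.
Proof.
move=> uS z; set G := undup (map f S).
have uG : uniq G by apply: undup_uniq.
have GS : supp_in G (pushf S f w).
  by move=> y /pushf_neq0[x [xS _ <-]]; rewrite mem_undup map_f.
have supp_pf := supp_in_supp_seq (finite_supp_pushf S f w).
rewrite (eq_pushf (S2 := G)) ?supp_seq_uniq //.
pose wz x := if g (f x) == z then w x else 0.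
rewrite /pushf big_mkcond [RHS]big_mkcond -(big_pushf wz uG (f := f)); last first.
  by move=> x xS; rewrite mem_undup map_f.
apply: eq_bigr => y _; rewrite /pushf; case: eqP => [gy|/eqP gy].
  by apply: eq_bigr => x /eqP fx; rewrite /wz fx gy eqxx.
by apply/esym/big1 => x /eqP fx; rewrite /wz fx (negPf gy).
Qed.

Section RealContinuity.
Context {Y : topologicalType}.
Implicit Types f g : Y -> R.

Lemma continuousD_R f g : continuous f -> continuous g ->
  continuous (fun y => f y + g y).
Proof. by move=> cf cg y; exact: (@continuousD R R^o Y f g y (cf y) (cg y)). Qed.

Lemma continuousB_R f g : continuous f -> continuous g ->
  continuous (fun y => f y - g y).
Proof. by move=> cf cg y; exact: (@continuousB R R^o Y f g y (cf y) (cg y)). Qed.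

Lemma continuous_min_R f g : continuous f -> continuous g ->
  continuous (fun y => Num.min (f y) (g y)).
Proof. by move=> cf cg y; exact: (@continuous_min R Y f g y (cf y) (cg y)). Qed.

Lemma continuous_max_R f g : continuous f -> continuous g ->
  continuous (fun y => Num.max (f y) (g y)).
Proof. by move=> cf cg y; exact: (@continuous_max R Y f g y (cf y) (cg y)). Qed.

Lemma continuous_sum_R (I : Type) (s : seq I) (Q : pred I) (F : I -> Y -> R) :
  (forall i, continuous (F i)) -> continuous (fun y => \sum_(i <- s | Q i) F i y).
Proof.
move=> cF; elim: s => [|i s IHs].
  by under eq_fun do rewrite big_nil; exact: cst_continuous.
under eq_fun do rewrite big_cons; case: (Q i) => //.
exact: continuousD_R.
Qed.

End RealContinuity.

Lemma continuous_coord (A : choiceType) (Y : topologicalType) (x : A) :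
  continuous (fun y : {ptws A -> R} * Y => y.1 x).
Proof.
move=> y; apply: (@continuous_comp _ _ _ fst (fun f : {ptws A -> R} => f x)).
  exact: cvg_fst.
exact: (@proj_continuous A (fun _ => R) x).
Qed.

Lemma ptws_continuous (Y : topologicalType) (B : choiceType) (g : Y -> {ptws B -> R}) :
  (forall z, continuous (fun y => g y z)) -> continuous g.
Proof.
move=> gz y.
pose coord i := Topological.class (initial_topology (fun f : B -> R => f i)).
apply/(@cvg_sup (B -> R) B coord) => i O /=.
rewrite (@nbhsE (initial_topology (fun f : B -> R => f i))) => -[C [[D oD <-] Cy] CO].
have : nbhs y [set x | D (g x i)] := gz i y D (open_nbhs_nbhs (conj oD Cy)).
by apply: filterS => x Dx; apply: CO.
Qed.

Lemma open_tube (X Y : topologicalType) (K : set Y) (O : set (X * Y)) :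
  compact K -> open O -> open [set x | forall y, K y -> O (x, y)].
Proof.
move=> cK oO; rewrite openE => x0 Ox0.
apply: (proj1 (compact_near_coveringP K) cK X (nbhs x0) (fun x y => O (x, y))) => y Ky.
have : nbhs (x0, y) O by move: oO; rewrite openE => /(_ _ (Ox0 _ Ky)).
case=> [[Q1 Q2] [/= Q1x0 Q2y] QO].
by exists (Q2, Q1) => // -[y' x'] [/= ? ?]; exact: (QO (x', y')).
Qed.

Section RealizationContinuity.
Variables (A B : choiceType) (P : set A) (le : A -> A -> Prop).
Variables (P' : set B) (le' : B -> B -> Prop).

(* [realization_point] states nonnegativity with Stdlib's [Rle]. *)
Lemma realization_point_ge0 t : realization_point P le t -> forall x, 0 <= t x.
Proof. by case=> t0 *; apply/RleP. Qed.

Lemma finite_supp_realization (p : realization P le) : finite_set (supp (set_val p)).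
Proof. by case: (set_valP p). Qed.

Lemma realization_continuous (f : realization P le -> realization P' le') :
  (forall F : set A, finite_set F -> exists F' : set B,
     exists g : {ptws A -> R} -> {ptws B -> R},
     [/\ finite_set F', continuous g & forall p, supp (set_val p) `<=` F ->
         supp (set_val (f p)) `<=` F' /\ set_val (f p) = g (set_val p)]) ->
  continuous f.
Proof.
move=> hf; apply/continuousP => O oO; rewrite realization_openE => F finF.
have [F' [g [finF' cg hg]]] := hf F finF.
have [V [oV hV]] := oO F' finF'.
exists (g @^-1` V); split; first by move/continuousP: cg; apply.
by move=> p sp; have [sF' fp] := hg p sp; rewrite /= -fp; exact: hV.
Qed.

(* The product topology on [realization P le * unit_interval] is not the weak
   topology of its finite subcomplexes; compactness of [0, 1] bridges the two. *)
Definition weakly_open (O : set (realization P le * unit_interval)) :=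
  forall F : set A, finite_set F -> exists Om : set ({ptws A -> R} * R), open Om /\
    forall p s, supp (set_val p) `<=` F -> (O (p, s) <-> Om (set_val p, set_val s)).

Lemma weakly_open_tube (O : set (realization P le * unit_interval)) (K : set R) :
  compact K -> K `<=` `[0, 1] -> weakly_open O ->
  open [set p | forall s : unit_interval, K (set_val s) -> O (p, s)].
Proof.
move=> cK K01 hO; rewrite realization_openE => F finF; have [Om [oOm hOm]] := hO F finF.
exists [set f | forall l, K l -> Om (f, l)]; split; first exact: open_tube.
move=> p sp; split => [Wp l Kl|Vp s Ks]; last exact/hOm/Vp.
by apply/(hOm p (SigSub (mem_set (K01 l Kl))) sp)/Wp.
Qed.

Lemma weakly_open_open (O : set (realization P le * unit_interval)) :
  weakly_open O -> open O.
Proof.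
move=> hO; rewrite openE => -[p0 s0] Op0.
have [Om [oOm hOm]] := hO _ (finite_supp_realization p0).
have : nbhs ((set_val p0, set_val s0) : {ptws A -> R} * R) Om.
  by move: oOm; rewrite openE; apply; apply/hOm.
case=> -[Q1 Q2] [/= Q1p0 /nbhs_ballP[e /= e0 eQ2]] QOm.
pose d := e / 2; have d0 : 0 < d by rewrite divr_gt0.
pose K := `[0, 1] `&` `[set_val s0 - d, set_val s0 + d].
have cK : compact K.
  by apply: compact_closedI; [exact: segment_compact|exact: interval_closed].
have W0 : forall s : unit_interval, K (set_val s) -> O (p0, s).
  move=> s [_ /=]; rewrite in_itv /= => /andP[s1 s2].
  apply/(hOm p0 s (@subset_refl _ _)); apply: (QOm (_, _)); split.
    exact: nbhs_singleton.
  apply: eQ2; rewrite /ball /= ltr_norml; apply/andP; split; rewrite /d in s1 s2 *; lra.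
rewrite /interior; change (filter_prod (nbhs p0) (nbhs s0) O).
exists ([set p | forall s : unit_interval, K (set_val s) -> O (p, s)],
        [set s : unit_interval | ball (set_val s0) d (set_val s)]).
  split.
    by apply: open_nbhs_nbhs; split => //; apply: weakly_open_tube => // l [].
  exact: (@initial_continuous _ _ set_val s0 _ (nbhsx_ballx _ _ d0)).
move=> [p s] [/= Wp]; rewrite /ball /= ltr_norml => /andP[s1 s2]; apply: Wp; split.
  exact: set_valP.
by rewrite /= in_itv /=; apply/andP; split; lra.
Qed.

Lemma realization_prod_continuous
    (Phi : realization P le * unit_interval -> realization P' le') :
  (forall F : set A, finite_set F -> exists F' : set B,
     exists g : {ptws A -> R} * R -> {ptws B -> R},
     [/\ finite_set F', continuous g & forall p s, supp (set_val p) `<=` F ->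
         supp (set_val (Phi (p, s))) `<=` F' /\
         set_val (Phi (p, s)) = g (set_val p, set_val s)]) ->
  continuous Phi.
Proof.
move=> hPhi; apply/continuousP => O oO; apply: weakly_open_open => F finF.
have [F' [g [finF' cg hg]]] := hPhi F finF.
have [V [oV hV]] := oO F' finF'.
exists (g @^-1` V); split; first by move/continuousP: cg; apply.
by move=> p s sp; have [sF' Phips] := hg p s sp; rewrite /= -Phips; exact: hV.
Qed.

End RealizationContinuity.

Definition poset_map (A B : choiceType) (P : set A) (le : A -> A -> Prop)
    (P' : set B) (le' : B -> B -> Prop) (f : A -> B) : Prop :=
  (forall x, P x -> P' (f x)) /\ (forall x y, P x -> P y -> le x y -> le' (f x) (f y)).

Lemma poset_map_comp (A B C : choiceType) (P : set A) (le : A -> A -> Prop)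
    (P' : set B) (le' : B -> B -> Prop) (P'' : set C) (le'' : C -> C -> Prop)
    (f : A -> B) (g : B -> C) :
  poset_map P le P' le' f -> poset_map P' le' P'' le'' g ->
  poset_map P le P'' le'' (g \o f).
Proof.
move=> [fP fle] [gP gle]; split => [x Px|x y Px Py lexy]; first exact/gP/fP.
by apply: gle; [exact: fP|exact: fP|exact: fle].
Qed.

Lemma realization_eq (A : choiceType) (P : set A) (le : A -> A -> Prop)
    (p q : realization P le) :
  set_val p = set_val q -> p = q.
Proof. by rewrite !set_valE => pq; apply: val_inj. Qed.

Section RealizationMap.
Variables (A B : choiceType) (P : set A) (le : A -> A -> Prop).
Variables (P' : set B) (le' : B -> B -> Prop) (f : A -> B).
Hypothesis hf : poset_map P le P' le' f.

Lemma realization_point_pushf t : realization_point P le t ->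
  realization_point P' le' (pushf (supp_seq t) f t).
Proof.
case: hf => fP fle /[dup] /realization_point_ge0 t0 [_ fin tP tch tsum].
set S := supp_seq t.
have tS := supp_in_supp_seq fin.
have finq := finite_supp_pushf S f t.
split.
- by move=> z; apply/RleP/pushf_ge0.
- exact: finq.
- by move=> z /pushf_neq0[x [_ tx <-]]; apply/fP/tP.
- move=> z1 z2 /pushf_neq0[x1 [_ tx1 <-]] /pushf_neq0[x2 [_ tx2 <-]].
  by case: (tch x1 x2 tx1 tx2) => le12; [left|right]; apply: fle => //; apply: tP.
rewrite fsbig_supp_seq //; rewrite fsbig_supp_seq // in tsum.
rewrite -[RHS]tsum (eq_big_supp (S2 := undup (map f S))) ?supp_seq_uniq ?undup_uniq //.
- by apply: big_pushf => [|x xS]; rewrite ?undup_uniq // mem_undup map_f.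
- exact: supp_in_supp_seq.
- by move=> z /pushf_neq0[x [xS _ <-]]; rewrite mem_undup map_f.
Qed.

Definition realize (p : realization P le) : realization P' le' :=
  SigSub (mem_set (realization_point_pushf (set_valP p))).

Lemma realizeE p : set_val (realize p) = pushf (supp_seq (set_val p)) f (set_val p).
Proof. by []. Qed.

Lemma realize_continuous : continuous realize.
Proof.
apply: realization_continuous => F finF.
exists (f @` F), (fun t : {ptws A -> R} => pushf (fset_set F) f t : {ptws B -> R}).
split; first exact: finite_image.
  apply: ptws_continuous => z; apply: continuous_sum_R => x.
  exact: (@proj_continuous A (fun _ => R) x).
move=> p sp; have tS := supp_in_supp_seq (finite_supp_realization p); split.
  by move=> z /pushf_neq0[x [_ tx <-]]; exists x => //; apply: sp.
apply/funext/eq_pushf; rewrite ?supp_seq_uniq ?fset_uniq //.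
by move=> x tx; rewrite in_fset_set //; apply/mem_set/sp.
Qed.

End RealizationMap.

Section RealizationFunctor.
Variables (A B C : choiceType) (P : set A) (le : A -> A -> Prop).
Variables (P' : set B) (le' : B -> B -> Prop) (P'' : set C) (le'' : C -> C -> Prop).

Lemma realize_comp (f : A -> B) (g : B -> C) (hf : poset_map P le P' le' f)
    (hg : poset_map P' le' P'' le'' g) (hgf : poset_map P le P'' le'' (g \o f))
    (p : realization P le) :
  realize hg (realize hf p) = realize hgf p.
Proof.
by apply/realization_eq/funext; rewrite !realizeE; apply/pushf_comp/supp_seq_uniq.
Qed.

Lemma realize_id (f : A -> A) (hf : poset_map P le P le f) :
  (forall x, P x -> f x = x) -> realize hf =1 id.
Proof.
move=> fid p; case: (set_valP p) => _ fin tP _ _; apply/realization_eq/funext => x /=.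
rewrite realizeE (@eq_in_pushf _ _ _ _ id) => [|y]; last first.
  by rewrite mem_supp_seq // => ty; apply/fid/tP.
apply: (@pushf_inj A A _ id) => //; [exact: supp_seq_uniq|exact: supp_in_supp_seq].
Qed.

End RealizationFunctor.

Lemma homotopic_refl (X Y : topologicalType) (f : X -> Y) :
  continuous f -> homotopic f f.
Proof.
move=> cf; exists (f \o fst); split; last by split.
by move=> x; apply: continuous_comp; [exact: cvg_fst|exact: cf].
Qed.

Section Cylinder.
Variables (A : choiceType) (P : set A) (le : A -> A -> Prop).
Implicit Types (S : seq A) (t : A -> R) (s : R).

Definition cyl_base (z : A + A) : A := match z with inl x | inr x => x end.

(* The product poset P * {0 < 1}, with [inl] the bottom and [inr] the top copy of P. *)
Definition cylinder : set (A + A) := fun z => P (cyl_base z).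

Definition cyl_le (z z' : A + A) : Prop :=
  match z, z' with
  | inl x, inl y | inr x, inr y | inl x, inr y => le x y
  | inr _, inl _ => False
  end.

Lemma poset_map_inl : poset_map P le cylinder cyl_le inl.
Proof. by []. Qed.

Lemma poset_map_inr : poset_map P le cylinder cyl_le inr.
Proof. by []. Qed.

Definition cum S t x : R := \sum_(y <- S | `[< le y x >]) t y.

(* The part of the interval [cum x - t x, cum x] lying above s.  As s decreases
   from 1 to 0, the weight of a chain moves, from its top element downwards,
   from the bottom copy of P to the top copy. *)
Definition mass S t s x : R := Num.max 0 (Num.min (t x) (cum S t x - s)).

Definition cyl_split S t s (z : A + A) : R :=
  match z with inl x => t x - mass S t s x | inr x => mass S t s x end.

Lemma mass_ge0 S t s x : 0 <= mass S t s x.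
Proof. by rewrite /mass le_max lexx. Qed.

Lemma mass_le S t s x : 0 <= t x -> mass S t s x <= t x.
Proof. by move=> tx0; rewrite /mass ge_max tx0 ge_min lexx. Qed.

Lemma mass_eq0 S t s x : t x = 0 -> mass S t s x = 0.
Proof. by move=> tx0; apply/max_l; rewrite ge_min tx0 lexx. Qed.

Lemma cyl_split_ge0 S t s z : (forall x, 0 <= t x) -> 0 <= cyl_split S t s z.
Proof. by move=> t0; case: z => x /=; rewrite ?subr_ge0 ?mass_le ?mass_ge0. Qed.

Lemma cyl_split_neq0 S t s z : cyl_split S t s z != 0 -> t (cyl_base z) != 0.
Proof.
by case: z => x /=; apply: contra => /eqP tx0; rewrite mass_eq0 ?tx0 ?subrr.
Qed.

Lemma eq_cum S1 S2 t : uniq S1 -> uniq S2 -> supp_in S1 t -> supp_in S2 t ->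
  cum S1 t =1 cum S2 t.
Proof.
by move=> uS1 uS2 tS1 tS2 x; apply: eq_big_supp.
Qed.

Lemma eq_cyl_split S1 S2 t s : uniq S1 -> uniq S2 -> supp_in S1 t -> supp_in S2 t ->
  cyl_split S1 t s =1 cyl_split S2 t s.
Proof. by move=> uS1 uS2 tS1 tS2 [] x /=; rewrite /mass (eq_cum uS1 uS2). Qed.

Lemma big_cyl_split S t s :
  \sum_(z <- map inl S ++ map inr S) cyl_split S t s z = \sum_(x <- S) t x.
Proof.
rewrite big_cat /= !big_map -big_split.
by apply: eq_bigr => x _; rewrite /= subrK.
Qed.

Lemma continuous_cyl_split S z :
  continuous (fun y : {ptws A -> R} * R => cyl_split S y.1 y.2 z).
Proof.
have cmass x : continuous (fun y : {ptws A -> R} * R => mass S y.1 y.2 x).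
  apply: continuous_max_R; first exact: cst_continuous.
  apply: continuous_min_R; first exact: continuous_coord.
  apply: continuousB_R; last by move=> y; exact: cvg_snd.
  by apply: continuous_sum_R => y; exact: continuous_coord.
by case: z => x /=; [apply: continuousB_R => //; exact: continuous_coord|exact: cmass].
Qed.

End Cylinder.

Section Prism.
Variables (A : choiceType) (P : set A) (le : A -> A -> Prop).
Hypotheses (le_refl : forall x, le x x)
  (le_trans : forall x y z, le x y -> le y z -> le x z)
  (le_anti : forall x y, le x y -> le y x -> x = y).
Implicit Types (S : seq A) (t : A -> R) (s : R).

Local Notation cum := (cum le).
Local Notation mass := (mass le).
Local Notation cyl_split := (cyl_split le).

Lemma cum_ge S t x : uniq S -> supp_in S t -> (forall y, 0 <= t y) -> t x <= cum S t x.
Proof.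
move=> uS tS t0.
case: (boolP (x \in S)) => xS.
  by rewrite /cum (big_rem x) //= asboolT // lerDl; apply: sumr_ge0.
by move: (contraNN (tS x) xS); rewrite negbK => /eqP ->; apply: sumr_ge0.
Qed.

Lemma cum_le_sum S t x : (forall y, 0 <= t y) -> cum S t x <= \sum_(y <- S) t y.
Proof.
move=> t0; rewrite /cum [X in X <= _]big_mkcond /=.
by apply: ler_sum => y _; case: ifP.
Qed.

(* The bottom-copy weight of [x1] lies below level [s] and the top-copy weight of
   [x2] above it; if [x2 < x1], the whole interval of [x2] would lie below that of
   [x1]. *)
Lemma le_cyl_split S t s x1 x2 : uniq S -> supp_in S t -> (forall x, 0 <= t x) ->
  (forall x y, t x != 0 -> t y != 0 -> le x y \/ le y x) ->
  t x1 - mass S t s x1 != 0 -> mass S t s x2 != 0 -> le x1 x2.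
Proof.
move=> uS tS t0 tch m1 m2.
have t1 : t x1 != 0 by apply: contra m1 => /eqP t1; rewrite mass_eq0 ?t1 ?subrr.
have t2 : t x2 != 0 by apply: contra m2 => /eqP t2; rewrite mass_eq0.
have [//|le21] := tch _ _ t1 t2.
have [-> //|ne12] := eqVneq x1 x2.
have mass_lt1 : mass S t s x1 < t x1.
  by rewrite lt_neqAle mass_le // andbT; apply: contra m1 => /eqP ->; rewrite subrr.
have mass_gt2 : 0 < mass S t s x2 by rewrite lt_neqAle mass_ge0 andbT eq_sym.
move: mass_lt1 mass_gt2; rewrite /mass gt_max gt_min ltxx lt_max ltxx lt_min /=.
move=> /andP[_ lt1] /andP[_ gt2].
have cum1 : cum S t x1 = t x1 + \sum_(y <- rem x1 S | `[< le y x1 >]) t y.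
  by rewrite /cum (big_rem x1) ?tS //= asboolT.
have cum2 : cum S t x2 = \sum_(y <- rem x1 S | `[< le y x2 >]) t y.
  rewrite /cum (big_rem x1) ?tS //= asboolF ?add0r // => le12.
  by move: ne12; rewrite (le_anti le12 le21) eqxx.
have cum21 : cum S t x2 <= cum S t x1 - t x1.
  rewrite cum1 cum2 addrC addKr !(big_mkcond (fun y => `[< le y _ >])) /=.
  apply: ler_sum => y _; have [le2|nle2] := pselect (le y x2).
    by rewrite !asboolT //; apply: le_trans le2 le21.
  by rewrite (asboolF nle2); case: ifP.
lra.
Qed.

Lemma realization_point_cyl_split t s : realization_point P le t ->
  realization_point (cylinder P) (cyl_le le) (cyl_split (supp_seq t) t s).
Proof.
move=> /[dup] /realization_point_ge0 t0 [_ fin tP tch tsum]; set S := supp_seq t.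
have uS := supp_seq_uniq t; have tS := supp_in_supp_seq fin.
set S2 := map inl S ++ map inr S.
have uS2 : uniq S2.
  rewrite cat_uniq !map_inj_uniq // => [|??[]|??[]] //; rewrite uS /=.
  rewrite andbT; apply/hasPn => _ /mapP[x _ ->]; by apply/mapP => -[].
have splitS2 : supp_in S2 (cyl_split S t s).
  by move=> [] x /cyl_split_neq0 /tS xS; rewrite mem_cat map_f ?orbT.
have fin2 : finite_set (supp (cyl_split S t s)).
  by apply: sub_finite_set (finite_seq S2) => z /splitS2.
split => //.
- by move=> z; apply/RleP/cyl_split_ge0.
- by move=> z /cyl_split_neq0 /tP.
- move=> [] x1 [] x2 /[dup] n1 /cyl_split_neq0 t1 /[dup] n2 /cyl_split_neq0 t2 /=.
  + exact: tch.
  + by left; apply: (le_cyl_split (S := S) (t := t) (s := s)).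
  + by right; apply: (le_cyl_split (S := S) (t := t) (s := s)).
  + exact: tch.
rewrite fsbig_supp_seq //; rewrite fsbig_supp_seq // in tsum.
rewrite -[RHS]tsum -(big_cyl_split le S t s).
by apply: eq_big_supp => //; [exact: supp_seq_uniq|exact: supp_in_supp_seq].
Qed.

Definition prism (ps : realization P le * unit_interval) :
    realization (cylinder P) (cyl_le le) :=
  SigSub (mem_set (realization_point_cyl_split (set_val ps.2) (set_valP ps.1))).

Lemma prismE p (s : unit_interval) :
  set_val (prism (p, s)) = cyl_split (supp_seq (set_val p)) (set_val p) (set_val s).
Proof. by []. Qed.

Lemma prism_continuous : continuous prism.
Proof.
apply: realization_prod_continuous => F finF.
exists (inl @` F `|` inr @` F),
  (fun y : {ptws A -> R} * R => cyl_split (fset_set F) y.1 y.2 : {ptws A + A -> R}).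
split.
- by rewrite finite_setU; split; apply: finite_image.
- by apply: ptws_continuous => z; exact: continuous_cyl_split.
move=> p s sp; have tS := supp_in_supp_seq (finite_supp_realization p); split.
  by move=> [] x /cyl_split_neq0 /sp Fx; [left|right]; exists x.
apply/funext/eq_cyl_split; rewrite ?supp_seq_uniq ?fset_uniq //.
by move=> x tx; rewrite in_fset_set //; apply/mem_set/sp.
Qed.

Lemma prism0 p (s : unit_interval) :
  set_val s = 0 -> prism (p, s) = realize (poset_map_inr P le) p.
Proof.
move=> s0; have t0 := realization_point_ge0 (set_valP p).
have fin := finite_supp_realization p.
have tS := supp_in_supp_seq fin; have uS := supp_seq_uniq (set_val p).
have mass0 x : mass (supp_seq (set_val p)) (set_val p) 0 x = set_val p x.
  by rewrite /mass subr0 min_l ?cum_ge // max_r ?t0.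
apply/realization_eq/funext => -[] x; rewrite prismE realizeE s0 /= mass0.
  by rewrite subrr; apply/esym/big1.
by rewrite (pushf_inj (f := inr)) //; move=> ?? [].
Qed.

Lemma prism1 p (s : unit_interval) :
  set_val s = 1 -> prism (p, s) = realize (poset_map_inl P le) p.
Proof.
move=> s1; have t0 := realization_point_ge0 (set_valP p).
case: (set_valP p) => _ fin _ _ tsum.
have tS := supp_in_supp_seq fin; have uS := supp_seq_uniq (set_val p).
rewrite fsbig_supp_seq // in tsum.
have mass1 x : mass (supp_seq (set_val p)) (set_val p) 1 x = 0.
  by apply/max_l; rewrite ge_min -[X in _ - X]tsum subr_le0 cum_le_sum ?orbT.
apply/realization_eq/funext => -[] x; rewrite prismE realizeE s1 /= mass1.
  by rewrite subr0 (pushf_inj (f := inl)) //; move=> ?? [].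
by apply/esym/big1.
Qed.

End Prism.

Section OrderHomotopy.
Variables (A B : choiceType) (P : set A) (le : A -> A -> Prop).
Variables (P' : set B) (le' : B -> B -> Prop).
Hypotheses (le_refl : forall x, le x x)
  (le_trans : forall x y z, le x y -> le y z -> le x z)
  (le_anti : forall x y, le x y -> le y x -> x = y)
  (le'_trans : forall x y z, le' x y -> le' y z -> le' x z).
Variables (L U : A -> B).
Hypotheses (hL : poset_map P le P' le' L) (hU : poset_map P le P' le' U)
  (LU : forall x, P x -> le' (L x) (U x)).

Definition cyl_copair (z : A + A) : B := match z with inl x => L x | inr x => U x end.

Lemma poset_map_copair : poset_map (cylinder P) (cyl_le le) P' le' cyl_copair.
Proof.
case: hL hU => LP Lle [UP Ule]; split; first by case=> x; [exact: LP|exact: UP].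
case=> x [] y Px Py //= lexy; [exact: Lle| |exact: Ule].
by apply: le'_trans (LU Py); exact: Lle.
Qed.

Theorem homotopic_realize : homotopic (realize hU) (realize hL).
Proof.
exists (realize poset_map_copair \o prism le_refl le_trans le_anti); split.
  move=> ps; apply: continuous_comp; first exact: prism_continuous.
  exact: realize_continuous.
split=> p s s01 /=.
- by rewrite prism0 //; exact: (realize_comp _ _ hU).
- by rewrite prism1 //; exact: (realize_comp _ _ hL).
Qed.

End OrderHomotopy.

Lemma fsubset_rel_anti (T : choiceType) (s t : {fset T}) :
  fsubset_rel s t -> fsubset_rel t s -> s = t.
Proof. by move=> st ts; apply/eqP; rewrite eqEfsubset st ts. Qed.

Section CliquesAndBoxes.
Variables (V : choiceType) (E : V -> V -> Prop) (eps : V -> bool).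

Local Open Scope fset_scope.

Local Notation cliques := (clique_set (expK2_vertices eps) (expK2_edges E)).
Local Notation boxes := (box_set E eps).

Definition box_of_clique (s : {fset V * V}) : {fset V} * {fset V} :=
  ([fset x.1 | x in s], [fset x.2 | x in s]).

Definition clique_of_box (st : {fset V} * {fset V}) : {fset V * V} := st.1 `*` st.2.

Lemma poset_map_box_of_clique :
  poset_map cliques fsubset_rel boxes box_le box_of_clique.
Proof.
split=> [s [/fset0Pn[a0 a0s] [sV sE]]|s t _ _ st].
  split=> /=.
  - by apply/fset0Pn; exists a0.1; apply: in_imfset.
  - by apply/fset0Pn; exists a0.2; apply: in_imfset.
  - by move=> _ /imfsetP[a as_ ->]; case: (sV a as_).
  - by move=> _ /imfsetP[a as_ ->]; case: (sV a as_).
  - by move=> _ _ /imfsetP[a as_ ->] /imfsetP[b bs ->]; case: (sE a b as_ bs).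
by split; apply/fsubsetP => _ /imfsetP[a as_ ->]; apply/in_imfset/(fsubsetP st).
Qed.

Lemma poset_map_clique_of_box : graph_sym E ->
  poset_map boxes box_le cliques fsubset_rel clique_of_box.
Proof.
move=> Esym; split=> [[a b] [/= /fset0Pn[x0 x0a] /fset0Pn[y0 y0b] aV0 bV1 abE]|].
  split; first by apply/fset0Pn; exists (x0, y0); rewrite in_fsetM x0a y0b.
  split=> [[x y]|[x1 x2] [y1 y2]]; rewrite !in_fsetM /=.
    by move=> /andP[xa yb]; split; [exact: aV0|exact: bV1].
  by move=> /andP[x1a x2b] /andP[y1a y2b]; split; [exact: abE|apply: Esym; exact: abE].
move=> st st' _ _ [le1 le2]; apply/fsubsetP => x; rewrite !in_fsetM => /andP[x1 x2].
by rewrite (fsubsetP le1) ?(fsubsetP le2).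
Qed.

Lemma box_of_cliqueK st : boxes st -> box_of_clique (clique_of_box st) = st.
Proof.
case: st => [a b] [/= /fset0Pn[x0 x0a] /fset0Pn[y0 y0b] _ _ _].
congr pair; apply/fsetP => z; apply/imfsetP/idP => [[[x y] /=]|za].
- by rewrite in_fsetM => /andP[xa yb] ->.
- by exists (z, y0); rewrite ?in_fsetM ?za ?y0b.
- by rewrite in_fsetM => /andP[xa yb] ->.
- by exists (x0, z); rewrite ?in_fsetM ?za ?x0a.
Qed.

Lemma clique_sub_box (s : {fset V * V}) :
  fsubset_rel s (clique_of_box (box_of_clique s)).
Proof. by apply/fsubsetP => x xs; rewrite in_fsetM !in_imfset. Qed.

End CliquesAndBoxes.

Theorem corollary3p4 (V : choiceType) (E : V -> V -> Prop) (eps : V -> bool) :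
  graph_sym E -> bigraph_hom E eps ->
  homotopy_equivalent
    (realization (clique_set (expK2_vertices eps) (expK2_edges E))
                 (@fsubset_rel (V * V)%type))
    (realization (box_set E eps) (@box_le V)).
Proof.
move=> Esym _.
have hF := poset_map_box_of_clique E eps; have hG := poset_map_clique_of_box eps Esym.
exists (realize hF), (realize hG).
split; first exact: realize_continuous.
split; first exact: realize_continuous.
split.
  have hid : poset_map (clique_set (expK2_vertices eps) (expK2_edges E)) fsubset_rel
    (clique_set (expK2_vertices eps) (expK2_edges E)) fsubset_rel id by [].
  rewrite (_ : _ \o _ = realize (poset_map_comp hF hG)); last first.
    by apply/funext => p; exact: realize_comp.
  rewrite -[X in homotopic _ X](funext (realize_id hid (fun _ _ => erefl))).
  apply: homotopic_realize => [x|x y z|x y|x y z|s _]; last exact: clique_sub_box.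
  - exact: fsubset_refl.
  - exact: fsubset_trans.
  - exact: fsubset_rel_anti.
  - exact: fsubset_trans.
rewrite (_ : _ \o _ = id); last first.
  apply/funext => q /=; rewrite (realize_comp _ _ (poset_map_comp hG hF)).
  by apply: realize_id => st; exact: box_of_cliqueK.
by apply: homotopic_refl => x; exact: cvg_id.
Qed.
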